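(* Let $(T,X)$ be a thickly stable flow, where $T$ is an abelian Hausdorff topological group and $X$ a Hausdorff uniform space. If $x\in X$ is an a.p. point, then the subflow $(T,\overline{Tx})$ is an a.p. flow even when $T$ is regarded as a discrete group (i.e. for every $\varepsilon\in\mathscr U_X$ there is a set $A\subseteq T$ and a finite set $F\subseteq T$ with $FA=T$ such that $Ay\subseteq\varepsilon[y]$ for all $y\in\overline{Tx}$), and moreover $(T,\overline{Tx})$ is equicontinuous.
   Context: $\mathscr U_X$ is a compatible symmetric uniformity of $X$; for $\varepsilon\in\mathscr U_X$ and $A\subseteq X$, $\varepsilon[A]=\{y:\exists a\in A,\ (a,y)\in\varepsilon\}$. A set $S\subseteq T$ is (right) thick if for every compact $K\subseteq T$ there is $t\in T$ with $Kt\subseteq S$; $A\subseteq T$ is (right) syndetic if there is a compact $K\subseteq T$ with $Kt\cap A\neq\emptyset$ for all $t\in T$. A point $x$ is almost periodic (a.p.) if $\{t: tx\in U\}$ is syndetic for every neighborhood $U$ of $x$. A flow $(T,X)$ is thickly stable if for every $\varepsilon\in\mathscr U_X$ and every $x\in X$ there exist $\delta\in\mathscr U_X$ and a thick $S\subseteq T$ such that $s(\delta[x])\subseteq\varepsilon[sx]$ for all $s\in S$. A flow is an a.p. flow if for every $\alpha\in\mathscr U_X$ there is a syndetic $A\subseteq T$ with $Ax\subseteq\alpha[x]$ for all $x\in X$. A flow $(T,Z)$ is equicontinuous if for every $\varepsilon\in\mathscr U$ and $z\in Z$ there is $\delta$ with $t(\delta[z])\subseteq\varepsilon[tz]$ for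 all $t\in T$. *)

From HB Require Import structures.
From mathcomp Require Import all_boot all_order all_algebra.
From mathcomp Require Import all_classical all_reals all_analysis.
Set Implicit Arguments. Unset Strict Implicit. Unset Printing Implicit Defensive.
Import Order.TTheory GRing.Theory Num.Theory.
Local Open Scope classical_set_scope.
Local Open Scope ring_scope.

(* An abelian Hausdorff topological group T is a [topologicalZmodType]
   (written additively: the product "Kt" of the paper is [K + t]). *)

Definition sym_entourage (X : uniformType) (e : set (X * X)) : Prop :=
  entourage e /\ (forall x y, e (x, y) -> e (y, x)).

Definition ent_img (X : uniformType) (e : set (X * X)) (A : set X) : set X :=
  [set y | exists2 a, A a & e (a, y)].

Definition is_flow (T : topologicalZmodType) (X : uniformType)
    (act : T -> X -> X) : Prop :=
  (forall x, act 0 x = x) /\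
  (forall s t x, act (s + t) x = act s (act t x)) /\
  continuous (fun p : T * X => act p.1 p.2).

Definition thick (T : topologicalZmodType) (S : set T) : Prop :=
  forall K : set T, compact K -> exists t : T, forall k, K k -> S (k + t).

Definition syndetic (T : topologicalZmodType) (A : set T) : Prop :=
  exists K : set T, compact K /\ forall t : T, exists2 k, K k & A (k + t).

Definition ap_point (T : topologicalZmodType) (X : uniformType)
    (act : T -> X -> X) (x : X) : Prop :=
  forall U : set X, nbhs x U -> syndetic [set t | U (act t x)].

Definition thickly_stable (T : topologicalZmodType) (X : uniformType)
    (act : T -> X -> X) : Prop :=
  forall (eps : set (X * X)) (x : X), sym_entourage eps ->
    exists delta : set (X * X), sym_entourage delta /\
      exists S : set T, thick S /\
        forall s, S s -> act s @` ent_img delta [set x] `<=` ent_img eps [set act s x].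

Definition orbit_closure (T : topologicalZmodType) (X : uniformType)
    (act : T -> X -> X) (x : X) : set X :=
  closure (range (fun t : T => act t x)).

Definition discrete_ap_subflow (T : topologicalZmodType) (X : uniformType)
    (act : T -> X -> X) (Y : set X) : Prop :=
  forall eps : set (X * X), sym_entourage eps ->
    exists A F : set T, finite_set F /\
      (forall t : T, exists f, exists a, [/\ F f, A a & t = f + a]) /\
      (forall y, Y y -> act^~ y @` A `<=` ent_img eps [set y]).

Definition equicontinuous_subflow (T : topologicalZmodType) (X : uniformType)
    (act : T -> X -> X) (Y : set X) : Prop :=
  forall (eps : set (X * X)) (z : X), sym_entourage eps -> Y z ->
    exists delta : set (X * X), sym_entourage delta /\
      forall t : T, act t @` (ent_img delta [set z] `&` Y)
                    `<=` ent_img eps [set act t z].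

From HB Require Import structures.
From mathcomp Require Import all_boot all_order all_algebra.
From mathcomp Require Import all_classical all_reals all_analysis.
From mathcomp Require Import finmap.
Import GRing.Theory.
Local Open Scope classical_set_scope.
Local Open Scope ring_scope.

(* Fix z and an entourage eps.  Thick stability at z gives
   delta and a thick set S of times that keep delta[z] inside eps[s z].  If
   p x and q x are delta-close to z and t is any time, the a.p. property
   yields a return time n of x (a syndetic set) with n + t in S; then t p x,
   (n+t) p x, (n+t) z, (n+t) q x, t q x form an eps-chain, so orbit points
   near z stay uniformly close under all of T ([orbit_points_stay_close]).
   Approximating y in Y by orbit points gives equicontinuity of (T, Y).

   By equicontinuity at x and commutativity,
   every a with a x close to x moves every point of Y only a little
   ([small_return_moves_little]); and the compact set witnessing that these
   return times are syndetic can be covered by finitely many translates, which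
   gives a finite F with F + A = T ([small_returns_finitely_syndetic]). *)

Section SymmetricEntourages.
Context {X : uniformType}.
Implicit Types (e eps : set (X * X)) (x y : X).

Lemma ent_img_set1 e x : ent_img e [set x] = [set y | e (x, y)].
Proof.
by rewrite funeqE => y; rewrite propeqE; split=> [[a -> //]|exy]; exists x.
Qed.

Lemma sym_entourage_refl {e} x : sym_entourage e -> e (x, x).
Proof. by move=> [/entourage_refl]. Qed.

Lemma sym_entourage_nbhs {e} x : sym_entourage e -> nbhs x [set y | e (x, y)].
Proof.
move=> [ent _]; apply: filterS (nbhs_entourage x ent) => y /=.
by rewrite /xsection /= in_setE.
Qed.

Lemma sym_entourage_split {eps} : sym_entourage eps ->
  exists2 e, sym_entourage e & forall a b c, e (a, b) -> e (b, c) -> eps (a, c).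
Proof.
move=> [ent _]; have [B entB BB] := entourage_split_ex ent.
exists (B `&` B^-1%relation).
  by split=> [|a b [? ?]]; [exact: entourage_invI | split].
by move=> a b c [ab _] [bc _]; apply: BB; exists b.
Qed.

Lemma sym_entourage_split4 {eps} : sym_entourage eps ->
  exists2 e, sym_entourage e & forall a b c d f,
    e (a, b) -> e (b, c) -> e (c, d) -> e (d, f) -> eps (a, f).
Proof.
move=> /sym_entourage_split[e1 sym1 e1eps].
have [e sym_e ee1] := sym_entourage_split sym1.
exists e => // a b c d f ab bc cd df.
by apply: (e1eps _ c); [exact: ee1 ab bc | exact: ee1 cd df].
Qed.

Lemma sym_entourage_split3 {eps} : sym_entourage eps ->
  exists2 e, sym_entourage e & forall a b c d,
    e (a, b) -> e (b, c) -> e (c, d) -> eps (a, d).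
Proof.
move=> /sym_entourage_split4[e sym_e e4]; exists e => // a b c d ab bc cd.
exact: (e4 a b c d d) (sym_entourage_refl d sym_e).
Qed.

End SymmetricEntourages.

Lemma syndetic_meets_thick {T : topologicalZmodType} {N S : set T} (t : T) :
  syndetic N -> thick S -> exists2 n, N n & S (n + t).
Proof.
move=> [K [cK NK]] thickS; have [s Ks] := thickS K cK.
have [k Kk Nk] := NK (s - t).
by exists (k + (s - t)) => //; rewrite addrA subrK; apply: Ks.
Qed.

(* Open covers of compact subsets of a topological group have finite
   subcovers; the group's zero serves as the base point the library needs. *)
Definition pointed_group (T : topologicalZmodType) : Type := T.
HB.instance Definition _ (T : topologicalZmodType) :=
  Topological.on (pointed_group T).
HB.instance Definition _ (T : topologicalZmodType) :=
  isPointed.Build (pointed_group T) (0 : T).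

Lemma compact_group_cover {T : topologicalZmodType} {K : set T} :
  compact K -> cover_compact K.
Proof.
by move=> cK; have : @compact (pointed_group T) K by []; rewrite compact_cover.
Qed.

Section Flow.
Context {T : topologicalZmodType} {X : uniformType} {act : T -> X -> X}.
Hypothesis flow : is_flow act.
Implicit Types (s t : T) (e eps : set (X * X)) (x y z : X).

Lemma act0 z : act 0 z = z.
Proof. by case: flow. Qed.

Lemma actA s t z : act s (act t z) = act (s + t) z.
Proof. by case: flow => _ [-> _]. Qed.

Lemma act_comm s t z : act s (act t z) = act t (act s z).
Proof. by rewrite !actA addrC. Qed.

Lemma act_continuous t : continuous (act t).
Proof.
move=> z; case: flow => _ [_ joint].
apply: (@continuous_comp _ _ _ (fun w => (t, w)) (fun p => act p.1 p.2)).
  by apply: cvg_pair; [exact: cvg_cst | exact: cvg_id].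
exact: joint.
Qed.

Lemma orbit_shift_continuous s x : continuous (fun k : T => act (s - k) x).
Proof.
move=> k; case: flow => _ [_ joint].
apply: (@continuous_comp _ _ _ (fun k => (s - k)) (fun t => act t x)).
  apply: (@continuous_comp _ _ _ (fun k => (s, k)) (fun p => (p.1 - p.2))).
    by apply: cvg_pair; [exact: cvg_cst | exact: cvg_id].
  exact: sub_continuous.
apply: (@continuous_comp _ _ _ (fun t => (t, x)) (fun p => act p.1 p.2)).
  by apply: cvg_pair; [exact: cvg_id | exact: cvg_cst].
exact: joint.
Qed.

Lemma act_ent_nbhs {e} t z : sym_entourage e ->
  nbhs z [set w | e (act t z, act t w)].
Proof. by move=> sym_e; exact: act_continuous (sym_entourage_nbhs _ sym_e). Qed.

Lemma orbit_closure_orbit x s : orbit_closure act x (act s x).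
Proof. by apply: subset_closure; exists s. Qed.

Lemma orbit_closure_center x : orbit_closure act x x.
Proof. by rewrite -{2}(act0 x); exact: orbit_closure_orbit. Qed.

Lemma orbit_closure_approx {x y} {B : set X} :
  orbit_closure act x y -> nbhs y B -> exists t, B (act t x).
Proof. by move=> Yy /Yy[_ [[t _ <-] Bw]]; exists t. Qed.

Lemma equicontinuous_subflowP (Y : set X) :
  equicontinuous_subflow act Y <->
  forall eps z, sym_entourage eps -> Y z ->
    exists2 delta, sym_entourage delta &
      forall t y, Y y -> delta (z, y) -> eps (act t z, act t y).
Proof.
split=> [equi eps z sym_eps Yz | equi eps z sym_eps Yz].
  have [delta [sym_delta close]] := equi eps z sym_eps Yz.
  exists delta => // t y Yy zy; have := close t (act t y).
  by rewrite !ent_img_set1; apply; exists y.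
have [delta sym_delta close] := equi eps z sym_eps Yz.
exists delta; split => // t _ [y [zy Yy] <-].
by rewrite ent_img_set1; rewrite ent_img_set1 in zy; exact: close.
Qed.

Section AlmostPeriodicPoint.
Context {x : X}.
Hypothesis ap_x : ap_point act x.

Lemma orbit_points_stay_close : thickly_stable act ->
  forall eps z, sym_entourage eps ->
  exists2 delta, sym_entourage delta & forall p q t,
    delta (z, act p x) -> delta (z, act q x) ->
    eps (act t (act p x), act t (act q x)).
Proof.
move=> stable eps z /sym_entourage_split4[e sym_e e4].
have [delta [sym_delta [S [thickS Sstable]]]] := stable e z sym_e.
exists delta => // p q t zp zq.
have Sclose w s : S s -> delta (z, w) -> e (act s z, act s w).
  move=> Ss zw; have := Sstable s Ss (act s w).
  by rewrite !ent_img_set1; apply; exists w.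
pose V := [set w | e (act t (act p x), act t (act p w)) /\
                   e (act t (act q x), act t (act q w))].
have nbhsV : nbhs x V.
  by apply: filterI; exact: act_continuous (act_ent_nbhs t _ sym_e).
have [n [Vp Vq] Sn] := syndetic_meets_thick t (ap_x _ nbhsV) thickS.
have shift r : act t (act r (act n x)) = act (n + t) (act r x).
  by rewrite !actA; congr (act _ x); rewrite [LHS]addrC addrA.
rewrite !shift in Vp Vq.
apply: (e4 _ (act (n + t) (act p x)) (act (n + t) z)
             (act (n + t) (act q x))) => //.
- exact: sym_e.2 (Sclose _ _ Sn zp).
- exact: Sclose.
- exact: sym_e.2.
Qed.

(* Approximate z and y in Y by orbit points p x and q x, then apply the
   previous lemma: t z, t p x, t q x, t y is a short chain. *)
Lemma equicontinuous_orbit_closure : thickly_stable act ->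
  equicontinuous_subflow act (orbit_closure act x).
Proof.
move=> stable; apply/equicontinuous_subflowP => eps z.
move=> /sym_entourage_split3[e1 sym1 e3] Yz.
have [delta sym_delta stay] := orbit_points_stay_close stable _ z sym1.
have [d sym_d dd] := sym_entourage_split sym_delta.
exists d => // t y Yy zy.
have nbhs_near w :
    nbhs w ([set v | e1 (act t w, act t v)] `&` [set v | d (w, v)]).
  by apply: filterI; [exact: act_ent_nbhs | exact: sym_entourage_nbhs].
have [p [tzp zp]] := orbit_closure_approx Yz (nbhs_near z).
have [q [tyq yq]] := orbit_closure_approx Yy (nbhs_near y).
apply: (e3 _ (act t (act p x)) (act t (act q x))) => //; last exact: sym1.2.
by apply: stay; [apply: (dd _ z) | apply: (dd _ y)] => //;
  exact: sym_entourage_refl.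
Qed.

Hypothesis equi : equicontinuous_subflow act (orbit_closure act x).

Lemma small_return_moves_little {eps} : sym_entourage eps ->
  exists2 delta, sym_entourage delta &
    forall a y, delta (x, act a x) -> orbit_closure act x y -> eps (y, act a y).
Proof.
move=> /sym_entourage_split3[e sym_e e3].
have /equicontinuous_subflowP equiP := equi.
have [delta sym_delta close] := equiP e x sym_e (orbit_closure_center x).
exists delta => // a y xa Yy.
have nbhs_y : nbhs y ([set w | e (y, w)] `&` [set w | e (act a y, act a w)]).
  by apply: filterI; [exact: sym_entourage_nbhs | exact: act_ent_nbhs].
have [t [yt atyt]] := orbit_closure_approx Yy nbhs_y.
apply: (e3 _ (act t x) (act a (act t x))) => //; last exact: sym_e.2.
by rewrite act_comm; apply: close => //; exact: orbit_closure_orbit.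
Qed.

Lemma small_returns_finitely_syndetic {delta} : sym_entourage delta ->
  exists F : set T, finite_set F /\
    forall t, exists2 f, F f & delta (x, act (t - f) x).
Proof.
move=> /sym_entourage_split[e sym_e ee].
have /equicontinuous_subflowP equiP := equi.
have [g sym_g close] := equiP e x sym_e (orbit_closure_center x).
have [K [cK returnK]] := ap_x _ (sym_entourage_nbhs x sym_g).
pose U k0 := interior [set k | e (x, act (k0 - k) x)].
have coverK : K `<=` cover K U.
  move=> k Kk; exists k => //.
  have : nbhs (act (k - k) x) [set v | e (x, v)].
    by rewrite subrr act0; exact: sym_entourage_nbhs.
  exact: orbit_shift_continuous.
have [D _ KD] :=
  compact_group_cover cK _ _ _ (fun _ _ => @open_interior _ _) coverK.
exists (-%R @` [set` D]); split; first exact/finite_image/finite_fset.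
move=> t; have [k Kk ktx] := returnK t.
have [k0 Dk0 /nbhs_singleton k0k] := KD k Kk.
exists (- k0); first by exists k0.
rewrite opprK; apply: (ee _ (act (k0 - k) x)) => //.
have := close (k0 - k) _ (orbit_closure_orbit _ _) ktx.
by rewrite actA addrA subrK addrC.
Qed.

(* A = times moving x by less than delta; F from the previous lemma. *)
Lemma discrete_ap_orbit_closure :
  discrete_ap_subflow act (orbit_closure act x).
Proof.
move=> eps /small_return_moves_little[delta sym_delta moves].
have [F [finF coverT]] := small_returns_finitely_syndetic sym_delta.
exists [set a | delta (x, act a x)], F; split => //; split.
  move=> t; have [f Ff close] := coverT t.
  by exists f, (t - f); split => //; rewrite addrC subrK.
by move=> y Yy _ [a xa <-]; rewrite ent_img_set1; exact: moves.
Qed.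

End AlmostPeriodicPoint.
End Flow.

Theorem theorem2p5 (T : topologicalZmodType) (X : uniformType)
    (act : T -> X -> X) (x : X) :
  hausdorff_space T -> hausdorff_space X ->
  is_flow act -> thickly_stable act -> ap_point act x ->
  discrete_ap_subflow act (orbit_closure act x) /\
  equicontinuous_subflow act (orbit_closure act x).
Proof.
move=> _ _ flow stable ap_x.
have equi := equicontinuous_orbit_closure flow ap_x stable.
by split => //; exact: discrete_ap_orbit_closure.
Qed.
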